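(* Let $\lambda_0,\dots,\lambda_n\in\mathbb{C}$ with $\lambda_0\neq\lambda_1$, $a\neq b$ real, and suppose $E_{(\lambda_0,\dots,\lambda_n)}$, $E_{(\lambda_0,\lambda_2,\dots,\lambda_n)}$, $E_{(\lambda_1,\dots,\lambda_n)}$ and $E_{(\lambda_2,\dots,\lambda_n)}$ are extended Chebyshev systems for $\{a,b\}$. Then for each $k=0,\dots,n-1$ there is a constant $C_k\neq0$ such that $$p_{(\lambda_0,\lambda_2,\dots,\lambda_n),k}-p_{(\lambda_1,\lambda_2,\dots,\lambda_n),k}=C_k\,p_{(\lambda_0,\lambda_1,\lambda_2,\dots,\lambda_n),k+1},$$ and $$\lim_{x\to b}\frac{p_{(\lambda_0,\lambda_2,\dots,\lambda_n),k}(x)}{p_{(\lambda_1,\dots,\lambda_n),k}(x)}\neq1.$$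
   Context: $E_{(\mu_0,\dots,\mu_m)}$ denotes the space of all $f\in C^\infty(\mathbb{R},\mathbb{C})$ with $(\frac{d}{dx}-\mu_0)\cdots(\frac{d}{dx}-\mu_m)f=0$ (dimension $m+1$). A zero of order (exactly) $k$ at $a$ means $f(a)=\dots=f^{(k-1)}(a)=0$, $f^{(k)}(a)\neq0$. $E_{(\mu_0,\dots,\mu_m)}$ is an extended Chebyshev system for $A\subset\mathbb{R}$ if every nonzero element has at most $m$ zeros in $A$ counted with multiplicity. In that case, for $A=\{a,b\}$, $a\ne b$, the Bernstein basis $p_{(\mu_0,\dots,\mu_m),k}$, $k=0,\dots,m$, is the unique family in $E_{(\mu_0,\dots,\mu_m)}$ with $p_{(\mu_0,\dots,\mu_m),k}$ having a zero of order exactly $k$ at $a$ and exactly $m-k$ at $b$, and $p^{(k)}_{(\mu_0,\dots,\mu_m),k}(a)=1$. *)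

From Stdlib Require Import Reals List Lia.
Open Scope R_scope.

Definition Cx := (R * R)%type.
Definition Czero : Cx := (0, 0).
Definition Cone : Cx := (1, 0).
Definition Cadd (z w : Cx) : Cx := (fst z + fst w, snd z + snd w).
Definition Copp (z : Cx) : Cx := (- fst z, - snd z).
Definition Csub (z w : Cx) : Cx := Cadd z (Copp w).
Definition Cmul (z w : Cx) : Cx :=
  (fst z * fst w - snd z * snd w, fst z * snd w + snd z * fst w).
Definition Cinv (z : Cx) : Cx :=
  let d := fst z * fst z + snd z * snd z in (fst z / d, - snd z / d).
Definition Cdiv (z w : Cx) : Cx := Cmul z (Cinv w).
Definition Cnorm (z : Cx) : R := sqrt (fst z * fst z + snd z * snd z).

(* D is the sequence of successive derivatives of f : R -> C
   (D 0 = f, D (k+1) = (D k)'), derivatives taken componentwise;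
   such a D exists iff f is C^infinity. *)
Definition smooth_with (f : R -> Cx) (D : nat -> R -> Cx) : Prop :=
  (forall x, D 0%nat x = f x) /\
  (forall (k : nat) (x : R),
      derivable_pt_lim (fun t => fst (D k t)) x (fst (D (S k) x)) /\
      derivable_pt_lim (fun t => snd (D k t)) x (snd (D (S k) x))).

(* Apply the differential operator (d/dx - mu_0)...(d/dx - mu_m) to a
   derivative sequence: the result is again a derivative sequence. *)
Fixpoint apply_ops (mus : list Cx) (D : nat -> R -> Cx) : nat -> R -> Cx :=
  match mus with
  | nil => D
  | mu :: rest =>
      let G := apply_ops rest D in
      fun k x => Csub (G (S k) x) (Cmul mu (G k x))
  end.

Definition in_E (mus : list Cx) (f : R -> Cx) : Prop :=
  exists D, smooth_with f D /\ forall x, apply_ops mus D 0%nat x = Czero.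

(* E_mus is an extended Chebyshev system for {a,b}: every nonzero element
   has at most m = length mus - 1 zeros in {a,b} counted with multiplicity,
   i.e. if it vanishes to order >= ka at a and >= kb at b then ka + kb <= m. *)
Definition ECT2 (mus : list Cx) (a b : R) : Prop :=
  forall f, in_E mus f -> (exists x, f x <> Czero) ->
  forall D (ka kb : nat), smooth_with f D ->
    (forall j, (j < ka)%nat -> D j a = Czero) ->
    (forall j, (j < kb)%nat -> D j b = Czero) ->
    (ka + kb < length mus)%nat.

(* p is the k-th Bernstein basis element p_{mus,k} of E_mus w.r.t. {a,b}:
   p in E_mus, zero of order exactly k at a with p^(k)(a) = 1, and zero of
   order exactly m - k at b, where m = length mus - 1. *)
Definition bernstein (mus : list Cx) (a b : R) (k : nat) (p : R -> Cx) : Prop :=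
  let m := pred (length mus) in
  (k <= m)%nat /\
  exists D, smooth_with p D /\ (forall x, apply_ops mus D 0%nat x = Czero) /\
    (forall j, (j < k)%nat -> D j a = Czero) /\ D k a = Cone /\
    (forall j, (j < m - k)%nat -> D j b = Czero) /\ D (m - k)%nat b <> Czero.

Definition climit (g : R -> Cx) (b : R) (L : Cx) : Prop :=
  forall eps, 0 < eps -> exists delta, 0 < delta /\
    forall x, x <> b -> Rabs (x - b) < delta -> Cnorm (Csub (g x) L) < eps.

(* Write the exponent list as l0 :: l1 :: M with l0 <> l1, and let
   p02 = p_((l0 :: M), k), p1 = p_((l1 :: M), k), q = p_((l0 :: l1 :: M), k+1),
   j = length M - k.  Both p02 and p1 lie in E_(l0 :: l1 :: M) (the factors of
   the operator commute), and so does g = p02 - p1.  Since p02 and p1 have the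
   same normalized k-th derivative at a, g vanishes to order k+1 at a and to
   order j at b.  By uniqueness in an extended Chebyshev system (a solution with
   more zeros in {a, b} than the dimension allows vanishes):
   - g <> 0, for otherwise p02 would lie in E_(l0 :: M) and E_(l1 :: M), hence
     in E_M, with k + j zeros;
   - C = g^(k+1)(a) <> 0, for otherwise g would have k + 2 + j zeros;
   - g = C q, since g - C q has k + 2 + j zeros.
   Finally p02 and p1 vanish to exact order j at b, so by Taylor's formula
   p02 / p1 tends to p02^(j)(b) / p1^(j)(b), which is not 1 because
   (p02 - p1)^(j)(b) = C q^(j)(b) <> 0. *)

From Stdlib Require Import Reals List Lia Lra Classical FunctionalExtensionality Factorial.
Open Scope R_scope.

Ltac cx_unfold := unfold Csub, Cadd, Copp, Cmul, Czero, Cone, Cinv, Cdiv in *; simpl in *.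

Ltac cx_ring :=
  repeat match goal with z : Cx |- _ => destruct z end; cx_unfold; f_equal; ring.

Lemma Cx_eta (z : Cx) : z = (fst z, snd z).
Proof. destruct z; reflexivity. Qed.

Lemma Cmul_1_l (w : Cx) : Cmul Cone w = w.
Proof. cx_ring. Qed.

Lemma Cmul_1_r (w : Cx) : Cmul w Cone = w.
Proof. cx_ring. Qed.

Lemma Csub_diag (z : Cx) : Csub z z = Czero.
Proof. cx_ring. Qed.

Lemma Csub_0_Cmul (mu : Cx) : Csub Czero (Cmul mu Czero) = Czero.
Proof. cx_ring. Qed.

Lemma Cone_neq_0 : Cone <> Czero.
Proof. cx_unfold; intro E; injection E; lra. Qed.

Lemma Cmod2_neq_0 (w : Cx) : w <> Czero -> fst w * fst w + snd w * snd w <> 0.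
Proof.
  destruct w as [w1 w2]; simpl; intros Hw E; apply Hw.
  assert (w1 = 0) by nra; assert (w2 = 0) by nra; subst; reflexivity.
Qed.

Lemma Csub_Cmul_eq_0 (u v c : Cx) : Csub u (Cmul c v) = Czero -> u = Cmul c v.
Proof.
  revert u; intros [u1 u2] E; destruct (Cmul c v) as [w1 w2].
  cx_unfold; injection E as E1 E2; f_equal; lra.
Qed.

Lemma Csub_neq_0 (z w : Cx) : z <> w -> Csub z w <> Czero.
Proof.
  destruct z as [z1 z2], w as [w1 w2]; cx_unfold; intros H E; injection E as E1 E2.
  apply H; f_equal; lra.
Qed.

Lemma Cdiv_mul_cancel (z w : Cx) : w <> Czero -> Cmul (Cdiv z w) w = z.
Proof.
  intros Hw; pose proof (Cmod2_neq_0 w Hw) as Hd.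
  destruct z as [z1 z2], w as [w1 w2]; cx_unfold; f_equal; field; exact Hd.
Qed.

Lemma Cmul_integral (z w : Cx) : Cmul z w = Czero -> z <> Czero -> w = Czero.
Proof.
  intros E Hz.
  assert (Hinv : Cmul (Cinv z) z = Cone).
  { pose proof (Cmod2_neq_0 z Hz) as Hd.
    destruct z as [z1 z2]; cx_unfold; f_equal; field; exact Hd. }
  replace w with (Cmul (Cmul (Cinv z) z) w) by (rewrite Hinv; apply Cmul_1_l).
  replace (Cmul (Cmul (Cinv z) z) w) with (Cmul (Cinv z) (Cmul z w)) by cx_ring.
  rewrite E; cx_ring.
Qed.

Lemma Cdiv_eq_1 (z w : Cx) : w <> Czero -> Cdiv z w = Cone -> z = w.
Proof. intros Hw E; rewrite <- (Cdiv_mul_cancel z w Hw), E; apply Cmul_1_l. Qed.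

Definition deriv_seq (D : nat -> R -> Cx) : Prop := forall k x,
  derivable_pt_lim (fun t => fst (D k t)) x (fst (D (S k) x)) /\
  derivable_pt_lim (fun t => snd (D k t)) x (snd (D (S k) x)).

Lemma smooth_deriv_seq (f : R -> Cx) (D : nat -> R -> Cx) :
  smooth_with f D -> deriv_seq D.
Proof. intros [_ H]; exact H. Qed.

Lemma derivable_pt_lim_of_zero (f : R -> R) (x l : R) :
  (forall t, f t = 0) -> derivable_pt_lim f x l -> l = 0.
Proof.
  intros Hf Hl; apply (uniqueness_limite f x); [exact Hl|].
  apply derivable_pt_lim_ext with (fun _ => 0); [intros t; rewrite Hf; reflexivity|].
  apply derivable_pt_lim_const.
Qed.

Lemma deriv_seq_zero (D : nat -> R -> Cx) :
  deriv_seq D -> (forall x, D 0%nat x = Czero) -> forall k x, D k x = Czero.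
Proof.
  intros HD H0 k; induction k as [|k IH]; intros x; [apply H0|].
  destruct (HD k x) as [Hfst Hsnd].
  rewrite (Cx_eta (D (S k) x)).
  rewrite (derivable_pt_lim_of_zero _ _ _ (fun t => f_equal fst (IH t)) Hfst).
  rewrite (derivable_pt_lim_of_zero _ _ _ (fun t => f_equal snd (IH t)) Hsnd).
  reflexivity.
Qed.

Definition Dcomb (D1 : nat -> R -> Cx) (c : Cx) (D2 : nat -> R -> Cx) : nat -> R -> Cx :=
  fun k x => Csub (D1 k x) (Cmul c (D2 k x)).

Lemma deriv_seq_comb (D1 D2 : nat -> R -> Cx) (c : Cx) :
  deriv_seq D1 -> deriv_seq D2 -> deriv_seq (Dcomb D1 c D2).
Proof.
  intros H1 H2 k x; destruct (H1 k x) as [A1 B1], (H2 k x) as [A2 B2].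
  destruct c as [c1 c2]; unfold Dcomb; cx_unfold; split.
  - apply derivable_pt_lim_plus; [exact A1|]; apply derivable_pt_lim_opp.
    apply derivable_pt_lim_minus; apply derivable_pt_lim_scal; assumption.
  - apply derivable_pt_lim_plus; [exact B1|]; apply derivable_pt_lim_opp.
    apply derivable_pt_lim_plus; apply derivable_pt_lim_scal; assumption.
Qed.

Definition annihilated (mus : list Cx) (D : nat -> R -> Cx) : Prop :=
  forall x, apply_ops mus D 0%nat x = Czero.

Lemma deriv_seq_ops (mus : list Cx) (D : nat -> R -> Cx) :
  deriv_seq D -> deriv_seq (apply_ops mus D).
Proof.
  intros HD; induction mus as [|mu mus IH]; simpl; [exact HD|].
  intros k x; exact (deriv_seq_comb _ _ mu (fun k => IH (S k)) IH k x).
Qed.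

Lemma ops_comb (mus : list Cx) (D1 D2 : nat -> R -> Cx) (c : Cx) (k : nat) (x : R) :
  apply_ops mus (Dcomb D1 c D2) k x =
  Csub (apply_ops mus D1 k x) (Cmul c (apply_ops mus D2 k x)).
Proof.
  revert k x; induction mus as [|mu mus IH]; intros k x; [reflexivity|].
  simpl; rewrite !IH; cx_ring.
Qed.

Lemma annihilated_comb (mus : list Cx) (D1 D2 : nat -> R -> Cx) (c : Cx) :
  annihilated mus D1 -> annihilated mus D2 -> annihilated mus (Dcomb D1 c D2).
Proof. intros H1 H2 x; rewrite ops_comb, H1, H2; apply Csub_0_Cmul. Qed.

Lemma ops_swap (l0 l1 : Cx) (mus : list Cx) (D : nat -> R -> Cx) (k : nat) (x : R) :
  apply_ops (l0 :: l1 :: mus) D k x = apply_ops (l1 :: l0 :: mus) D k x.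
Proof. simpl; cx_ring. Qed.

Lemma annihilated_cons (mu : Cx) (mus : list Cx) (D : nat -> R -> Cx) :
  deriv_seq D -> annihilated mus D -> annihilated (mu :: mus) D.
Proof.
  intros HD H x; pose proof (deriv_seq_zero _ (deriv_seq_ops mus D HD) H) as Z.
  simpl; rewrite !Z; apply Csub_0_Cmul.
Qed.

(* E_(l0 :: mus) and E_(l1 :: mus) intersect in E_mus when l0 <> l1:
   subtracting the two equations leaves (l1 - l0) g = 0 for g solving mus. *)
Lemma annihilated_inter (l0 l1 : Cx) (mus : list Cx) (D : nat -> R -> Cx) :
  l0 <> l1 -> annihilated (l0 :: mus) D -> annihilated (l1 :: mus) D ->
  annihilated mus D.
Proof.
  intros Hl H0 H1 x; specialize (H0 x); specialize (H1 x); simpl in H0, H1.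
  apply (Cmul_integral (Csub l1 l0)); [|apply Csub_neq_0; congruence].
  revert H0 H1; generalize (apply_ops mus D 1%nat x) (apply_ops mus D 0%nat x).
  intros [u1 u2] [v1 v2]; destruct l0, l1; cx_unfold.
  intros E0 E1; injection E0 as A B; injection E1 as C D'; f_equal; lra.
Qed.

Definition vanishes_to (D : nat -> R -> Cx) (x : R) (k : nat) : Prop :=
  forall i, (i < k)%nat -> D i x = Czero.

Lemma ECT2_zero (mus : list Cx) (a b : R) (D : nat -> R -> Cx) (ka kb : nat) :
  ECT2 mus a b -> deriv_seq D -> annihilated mus D ->
  vanishes_to D a ka -> vanishes_to D b kb -> (length mus <= ka + kb)%nat ->
  forall i x, D i x = Czero.
Proof.
  intros Hect HD Hann Ha Hb Hlen; apply deriv_seq_zero; [exact HD|].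
  intros x; apply NNPP; intros Hx.
  assert (Hs : smooth_with (D 0%nat) D) by (split; [reflexivity|exact HD]).
  pose proof (Hect (D 0%nat) (ex_intro _ D (conj Hs Hann)) (ex_intro _ x Hx)
                D ka kb Hs Ha Hb).
  lia.
Qed.
Lemma mean_value_bound (phi phi' : R -> R) (b x K : R) :
  (forall t, derivable_pt_lim phi t (phi' t)) ->
  (forall t, Rabs (t - b) <= Rabs (x - b) -> Rabs (phi' t) <= K) ->
  Rabs (phi x - phi b) <= K * Rabs (x - b).
Proof.
  intros Hd Hbound.
  destruct (MVT_abs phi phi' b x (fun c _ => Hd c)) as [c [E Hc]].
  rewrite E.
  apply Rmult_le_compat_r; [apply Rabs_pos|]; apply Hbound.
  unfold Rmin, Rmax in Hc; destruct (Rle_dec b x).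
  - rewrite !Rabs_pos_eq; lra.
  - rewrite !Rabs_left1; lra.
Qed.

Lemma derivable_pt_lim_shifted_pow (b : R) (j : nat) (x : R) :
  derivable_pt_lim (fun t => (t - b) ^ S j) x (INR (S j) * (x - b) ^ j).
Proof.
  replace (INR (S j) * (x - b) ^ j) with (INR (S j) * (x - b) ^ j * 1) by ring.
  apply (derivable_pt_lim_comp (fun t => t - b) (fun y => y ^ S j)).
  - replace 1 with (1 - 0) by ring.
    apply derivable_pt_lim_minus; [apply derivable_pt_lim_id|apply derivable_pt_lim_const].
  - apply derivable_pt_lim_pow.
Qed.

(* Induction on j, integrating the statement for the derivative H 1 by the
   mean value inequality. *)
Lemma taylor_little_o (j : nat) : forall (H : nat -> R -> R) (b : R),
  (forall k x, derivable_pt_lim (H k) x (H (S k) x)) ->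
  (forall i, (i < j)%nat -> H i b = 0) ->
  forall eps, 0 < eps -> exists delta, 0 < delta /\ forall x, Rabs (x - b) < delta ->
    Rabs (H 0%nat x - H j b / INR (fact j) * (x - b) ^ j) <= eps * Rabs (x - b) ^ j.
Proof.
  induction j as [|j IH]; intros H b HD HZ eps Heps.
  - assert (Hcont : continuity_pt (H 0%nat) b)
      by (apply derivable_continuous_pt; exists (H 1%nat b); apply HD).
    destruct (Hcont eps Heps) as [d [Hd Hnear]].
    exists d; split; [exact Hd|]; intros x Hx; simpl.
    replace (H 0%nat x - H 0%nat b / 1 * 1) with (H 0%nat x - H 0%nat b) by field.
    destruct (Req_dec x b) as [->|Hxb].
    + unfold Rminus; rewrite Rplus_opp_r, Rabs_R0; lra.
    + apply Rlt_le; rewrite Rmult_1_r.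
      exact (Hnear x (conj (conj I (not_eq_sym Hxb)) Hx)).
  - destruct (IH (fun k => H (S k)) b (fun k => HD (S k)) (fun i Hi => HZ (S i) ltac:(lia))
      eps Heps) as [d [Hd Hx]].
    exists d; split; [exact Hd|]; intros x Hxd.
    set (c := H (S j) b / INR (fact (S j))).
    set (phi := fun t => H 0%nat t - c * (t - b) ^ S j).
    set (phi' := fun t => H 1%nat t - H (S j) b / INR (fact j) * (t - b) ^ j).
    assert (Hfact : INR (fact (S j)) = INR (S j) * INR (fact j))
      by (rewrite fact_simpl, mult_INR; reflexivity).
    assert (Hphi : forall t, derivable_pt_lim phi t (phi' t)).
    { intros t; unfold phi'.
      replace (H (S j) b / INR (fact j) * (t - b) ^ j)
        with (c * (INR (S j) * (t - b) ^ j))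
        by (unfold c; rewrite Hfact; field;
            split; apply not_0_INR; [apply fact_neq_0|lia]).
      apply (derivable_pt_lim_minus (H 0%nat) (fun t => c * (t - b) ^ S j));
        [apply HD|].
      apply (derivable_pt_lim_scal (fun t => (t - b) ^ S j)).
      apply derivable_pt_lim_shifted_pow. }
    assert (Hphib : phi b = 0)
      by (unfold phi; rewrite (HZ 0%nat ltac:(lia)); simpl; ring).
    assert (Hbound := mean_value_bound phi phi' b x (eps * Rabs (x - b) ^ j) Hphi).
    rewrite Hphib, Rminus_0_r in Hbound.
    replace (eps * Rabs (x - b) ^ S j) with (eps * Rabs (x - b) ^ j * Rabs (x - b))
      by (simpl; ring).
    apply Hbound; intros t Ht.
    apply Rle_trans with (eps * Rabs (t - b) ^ j); [apply Hx; lra|].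
    apply Rmult_le_compat_l; [lra|]; apply pow_incr; split; [apply Rabs_pos|exact Ht].
Qed.

Lemma taylor_quotient_limit (j : nat) (H : nat -> R -> R) (b : R) :
  (forall k x, derivable_pt_lim (H k) x (H (S k) x)) ->
  (forall i, (i < j)%nat -> H i b = 0) ->
  limit1_in (fun x => / (x - b) ^ j * H 0%nat x) (fun x => x <> b)
    (/ INR (fact j) * H j b) b.
Proof.
  intros HD HZ eps Heps.
  destruct (taylor_little_o j H b HD HZ (eps / 2) ltac:(lra)) as [d [Hd Hx]].
  exists d; split; [exact Hd|]; intros x [Hxb Hxd]; simpl in *; unfold Rdist in *.
  specialize (Hx x Hxd).
  assert (Hp : (x - b) ^ j <> 0) by (apply pow_nonzero; lra).
  assert (Hpos : 0 < Rabs ((x - b) ^ j)) by (apply Rabs_pos_lt; exact Hp).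
  assert (Hf : INR (fact j) <> 0) by (apply not_0_INR, fact_neq_0).
  replace (/ (x - b) ^ j * H 0%nat x - / INR (fact j) * H j b) with
    (/ (x - b) ^ j * (H 0%nat x - H j b / INR (fact j) * (x - b) ^ j)) by (field; auto).
  rewrite Rabs_mult, Rabs_inv, <- RPow_abs.
  rewrite <- RPow_abs in Hpos.
  apply Rle_lt_trans with (eps / 2); [|lra].
  apply (Rmult_le_reg_l (Rabs (x - b) ^ j)); [exact Hpos|].
  rewrite <- Rmult_assoc, Rinv_r, Rmult_1_l by lra; lra.
Qed.

Definition Cscale (t : R) (z : Cx) : Cx := (t * fst z, t * snd z).

Lemma Cdiv_scale (t : R) (z w : Cx) : t <> 0 -> Cdiv (Cscale t z) (Cscale t w) = Cdiv z w.
Proof.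
  intros Ht; destruct (classic (w = Czero)) as [->|Hw].
  - destruct z; unfold Cscale, Cdiv, Cmul, Cinv, Czero; simpl.
    f_equal; unfold Rdiv; ring.
  - pose proof (Cmod2_neq_0 w Hw) as Hd.
    destruct z as [z1 z2], w as [w1 w2]; unfold Cscale, Cdiv, Cmul, Cinv; simpl in *.
    assert (Hd' : t * w1 * (t * w1) + t * w2 * (t * w2) <> 0).
    { replace (t * w1 * (t * w1) + t * w2 * (t * w2)) with (t * t * (w1 * w1 + w2 * w2))
        by ring.
      apply Rmult_integral_contrapositive; split; [apply Rmult_integral_contrapositive|]; auto. }
    f_equal; field; split; assumption.
Qed.

Lemma limit_Cdiv (f g : R -> Cx) (Dom : R -> Prop) (x0 : R) (A B : Cx) :
  limit1_in (fun x => fst (f x)) Dom (fst A) x0 -> limit1_in (fun x => snd (f x)) Dom (snd A) x0 ->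
  limit1_in (fun x => fst (g x)) Dom (fst B) x0 -> limit1_in (fun x => snd (g x)) Dom (snd B) x0 ->
  B <> Czero ->
  limit1_in (fun x => fst (Cdiv (f x) (g x))) Dom (fst (Cdiv A B)) x0 /\
  limit1_in (fun x => snd (Cdiv (f x) (g x))) Dom (snd (Cdiv A B)) x0.
Proof.
  intros Hf1 Hf2 Hg1 Hg2 HB.
  assert (Hmod : limit1_in (fun x => / (fst (g x) * fst (g x) + snd (g x) * snd (g x))) Dom
                   (/ (fst B * fst B + snd B * snd B)) x0).
  { apply limit_inv; [apply limit_plus; apply limit_mul; assumption|].
    apply Cmod2_neq_0; exact HB. }
  unfold Cdiv, Cmul, Cinv, Rdiv; simpl; split.
  - apply limit_minus; apply limit_mul; try apply limit_mul; try apply limit_Ropp; assumption.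
  - apply limit_plus; apply limit_mul; try apply limit_mul; try apply limit_Ropp; assumption.
Qed.

Lemma climit_of_components (g : R -> Cx) (b : R) (L : Cx) :
  limit1_in (fun x => fst (g x)) (fun x => x <> b) (fst L) b ->
  limit1_in (fun x => snd (g x)) (fun x => x <> b) (snd L) b ->
  climit g b L.
Proof.
  intros H1 H2 eps Heps.
  destruct (H1 (eps / 2) ltac:(lra)) as [d1 [Hd1 X1]].
  destruct (H2 (eps / 2) ltac:(lra)) as [d2 [Hd2 X2]].
  exists (Rmin d1 d2); split; [apply Rmin_pos; assumption|]; intros x Hxb Hx.
  specialize (X1 x (conj Hxb (Rlt_le_trans _ _ _ Hx (Rmin_l d1 d2)))).
  specialize (X2 x (conj Hxb (Rlt_le_trans _ _ _ Hx (Rmin_r d1 d2)))).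
  simpl in X1, X2; unfold Rdist in X1, X2.
  unfold Cnorm, Csub, Cadd, Copp; simpl.
  apply Rabs_def2 in X1, X2.
  set (u := fst (g x) + - fst L); set (v := snd (g x) + - snd L).
  assert (Hu : - (eps / 2) < u < eps / 2) by (unfold u; lra).
  assert (Hv : - (eps / 2) < v < eps / 2) by (unfold v; lra).
  rewrite <- (sqrt_square eps) by lra.
  apply sqrt_lt_1_alt; split; nra.
Qed.

Lemma climit_ratio (D1 D2 : nat -> R -> Cx) (b : R) (j : nat) :
  deriv_seq D1 -> deriv_seq D2 -> vanishes_to D1 b j -> vanishes_to D2 b j ->
  D2 j b <> Czero ->
  climit (fun x => Cdiv (D1 0%nat x) (D2 0%nat x)) b (Cdiv (D1 j b) (D2 j b)).
Proof.
  intros H1 H2 Z1 Z2 Hnz.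
  set (s := fun x => / (x - b) ^ j).
  set (F := / INR (fact j)).
  assert (HF : F <> 0) by (apply Rinv_neq_0_compat, not_0_INR, fact_neq_0).
  assert (Hlim : forall D, deriv_seq D -> vanishes_to D b j ->
    limit1_in (fun x => fst (Cscale (s x) (D 0%nat x))) (fun x => x <> b)
      (fst (Cscale F (D j b))) b /\
    limit1_in (fun x => snd (Cscale (s x) (D 0%nat x))) (fun x => x <> b)
      (snd (Cscale F (D j b))) b).
  { intros D HD Z; split.
    - apply (taylor_quotient_limit j (fun k t => fst (D k t)));
        [intros k x; apply (HD k x) | intros i Hi; simpl; rewrite (Z i Hi); reflexivity].
    - apply (taylor_quotient_limit j (fun k t => snd (D k t)));
        [intros k x; apply (HD k x) | intros i Hi; simpl; rewrite (Z i Hi); reflexivity]. }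
  destruct (Hlim D1 H1 Z1) as [L11 L12], (Hlim D2 H2 Z2) as [L21 L22].
  assert (HnzF : Cscale F (D2 j b) <> Czero).
  { intros E; apply Hnz; rewrite (Cx_eta (D2 j b)); unfold Cscale, Czero in *.
    injection E as E1 E2; f_equal; nra. }
  destruct (limit_Cdiv _ _ _ _ _ _ L11 L12 L21 L22 HnzF) as [Lfst Lsnd].
  rewrite Cdiv_scale in Lfst, Lsnd by exact HF.
  intros eps Heps; destruct (climit_of_components _ _ _ Lfst Lsnd eps Heps) as [d [Hd Hx]].
  exists d; split; [exact Hd|]; intros x Hxb Hxd.
  rewrite <- (Cdiv_scale (s x)); [exact (Hx x Hxb Hxd)|].
  apply Rinv_neq_0_compat, pow_nonzero; lra.
Qed.

Section BernsteinDifference.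

Variables (l0 l1 : Cx) (M : list Cx) (a b : R) (k j : nat) (D02 D1 Dq : nat -> R -> Cx).

Hypothesis l0_neq_l1 : l0 <> l1.
Hypothesis orders : (k + j)%nat = length M.
Hypothesis ect_M : ECT2 M a b.
Hypothesis ect_full : ECT2 (l0 :: l1 :: M) a b.

(* D02, D1 and Dq are the derivatives of p_((l0 :: M), k), p_((l1 :: M), k)
   and p_((l0 :: l1 :: M), k+1); here j = length M - k. *)
Hypothesis D02_seq : deriv_seq D02.
Hypothesis D02_ann : annihilated (l0 :: M) D02.
Hypothesis D02_a : vanishes_to D02 a k.
Hypothesis D02_ka : D02 k a = Cone.
Hypothesis D02_b : vanishes_to D02 b j.

Hypothesis D1_seq : deriv_seq D1.
Hypothesis D1_ann : annihilated (l1 :: M) D1.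
Hypothesis D1_a : vanishes_to D1 a k.
Hypothesis D1_ka : D1 k a = Cone.
Hypothesis D1_b : vanishes_to D1 b j.
Hypothesis D1_jb : D1 j b <> Czero.

Hypothesis Dq_seq : deriv_seq Dq.
Hypothesis Dq_ann : annihilated (l0 :: l1 :: M) Dq.
Hypothesis Dq_a : vanishes_to Dq a (S k).
Hypothesis Dq_ka : Dq (S k) a = Cone.
Hypothesis Dq_b : vanishes_to Dq b j.
Hypothesis Dq_jb : Dq j b <> Czero.

Let Dg : nat -> R -> Cx := Dcomb D02 Cone D1.

Lemma diff_seq : deriv_seq Dg.
Proof. exact (deriv_seq_comb _ _ Cone D02_seq D1_seq). Qed.

Lemma diff_annihilated : annihilated (l0 :: l1 :: M) Dg.
Proof.
  apply annihilated_comb; [|exact (annihilated_cons _ _ _ D1_seq D1_ann)].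
  intros x; rewrite ops_swap; exact (annihilated_cons _ _ _ D02_seq D02_ann x).
Qed.

(* The leading coefficients at a cancel: the difference vanishes to order k+1. *)
Lemma diff_vanishes_a : vanishes_to Dg a (S k).
Proof.
  intros i Hi; unfold Dg, Dcomb; destruct (Nat.eq_dec i k) as [->|Hik].
  - rewrite D02_ka, D1_ka, Cmul_1_l; apply Csub_diag.
  - rewrite D02_a, D1_a by lia; apply Csub_0_Cmul.
Qed.

Lemma diff_vanishes_b : vanishes_to Dg b j.
Proof. intros i Hi; unfold Dg, Dcomb; rewrite D02_b, D1_b by exact Hi; apply Csub_0_Cmul. Qed.

(* The two Bernstein functions differ: otherwise p_((l0 :: M), k) would lie in
   E_(l0 :: M) and in E_(l1 :: M), hence in E_M, where it has k + j = length M
   zeros, forcing it to vanish. *)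
Lemma diff_nonzero : ~ (forall i x, Dg i x = Czero).
Proof.
  intros Z.
  assert (Heq : D02 = D1).
  { apply functional_extensionality; intros i; apply functional_extensionality; intros x.
    rewrite <- (Cmul_1_l (D1 i x)); apply Csub_Cmul_eq_0, Z. }
  assert (HM : annihilated M D02)
    by (apply (annihilated_inter l0 l1); [exact l0_neq_l1|exact D02_ann|rewrite Heq; exact D1_ann]).
  apply Cone_neq_0; rewrite <- D02_ka.
  apply (ECT2_zero M a b D02 k j); auto; lia.
Qed.

Lemma diff_leading_nonzero : Dg (S k) a <> Czero.
Proof.
  intros HC; apply diff_nonzero.
  apply (ECT2_zero _ a b Dg (S (S k)) j ect_full diff_seq diff_annihilated);
    [|exact diff_vanishes_b|simpl; lia].
  intros i Hi; destruct (Nat.eq_dec i (S k)) as [->|Hik]; [exact HC|].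
  apply diff_vanishes_a; lia.
Qed.

(* Uniqueness of the Bernstein basis: the difference minus C_k times
   p_((l0 :: l1 :: M), k+1) has k + 2 + j zeros in {a, b}, one too many. *)
Lemma diff_proportional : forall i x, Dg i x = Cmul (Dg (S k) a) (Dq i x).
Proof.
  set (C := Dg (S k) a).
  assert (Z : forall i x, Dcomb Dg C Dq i x = Czero).
  { apply (ECT2_zero _ a b _ (S (S k)) j ect_full).
    - exact (deriv_seq_comb _ _ C diff_seq Dq_seq).
    - exact (annihilated_comb _ _ _ C diff_annihilated Dq_ann).
    - intros i Hi; unfold Dcomb; destruct (Nat.eq_dec i (S k)) as [->|Hik].
      + rewrite Dq_ka, Cmul_1_r; apply Csub_diag.
      + rewrite diff_vanishes_a, Dq_a by lia; apply Csub_0_Cmul.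
    - intros i Hi; unfold Dcomb; rewrite diff_vanishes_b, Dq_b by exact Hi.
      apply Csub_0_Cmul.
    - simpl; lia. }
  intros i x; exact (Csub_Cmul_eq_0 _ _ _ (Z i x)).
Qed.

(* The limit of the quotient at b is the quotient of the j-th derivatives, and
   it is not 1, since the j-th derivative of the difference is C_k q^(j)(b) <> 0. *)
Lemma ratio_limit_neq_1 : Cdiv (D02 j b) (D1 j b) <> Cone.
Proof.
  intros E; apply Cdiv_eq_1 in E; [|exact D1_jb].
  apply Dq_jb, (Cmul_integral (Dg (S k) a)); [|exact diff_leading_nonzero].
  rewrite <- diff_proportional; unfold Dg, Dcomb; rewrite E, Cmul_1_l; apply Csub_diag.
Qed.

Lemma bernstein_difference_seq :
  (exists Ck : Cx, Ck <> Czero /\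
     forall x, Csub (D02 0%nat x) (D1 0%nat x) = Cmul Ck (Dq 0%nat x)) /\
  (exists L : Cx, L <> Cone /\ climit (fun x => Cdiv (D02 0%nat x) (D1 0%nat x)) b L).
Proof.
  split.
  - exists (Dg (S k) a); split; [exact diff_leading_nonzero|intros x].
    rewrite <- diff_proportional; unfold Dg, Dcomb; rewrite Cmul_1_l; reflexivity.
  - exists (Cdiv (D02 j b) (D1 j b)); split; [exact ratio_limit_neq_1|].
    exact (climit_ratio D02 D1 b j D02_seq D1_seq D02_b D1_b D1_jb).
Qed.

End BernsteinDifference.

Lemma bernstein_difference (l0 l1 : Cx) (M : list Cx) (a b : R) (k : nat)
    (p02 p1 q : R -> Cx) :
  l0 <> l1 -> ECT2 (l0 :: l1 :: M) a b -> ECT2 M a b ->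
  bernstein (l0 :: M) a b k p02 -> bernstein (l1 :: M) a b k p1 ->
  bernstein (l0 :: l1 :: M) a b (S k) q ->
  (exists Ck : Cx, Ck <> Czero /\ forall x, Csub (p02 x) (p1 x) = Cmul Ck (q x)) /\
  (exists L : Cx, L <> Cone /\ climit (fun x => Cdiv (p02 x) (p1 x)) b L).
Proof.
  intros Hl Efull EM [Hk [D02 [S02 (A02 & Za02 & K02 & Zb02 & _)]]]
    [_ [D1 [S1 (A1 & Za1 & K1 & Zb1 & N1)]]] [_ [Dq [Sq (Aq & Zaq & Kq & Zbq & Nq)]]].
  simpl in Hk, Zb02, Zb1, N1, Zbq, Nq.
  assert (Hp : forall (p : R -> Cx) D, smooth_with p D -> p = D 0%nat)
    by (intros p D [H0 _]; apply functional_extensionality; intros x; rewrite H0; reflexivity).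
  rewrite (Hp _ _ S02), (Hp _ _ S1), (Hp _ _ Sq).
  apply smooth_deriv_seq in S02, S1, Sq.
  eapply (bernstein_difference_seq l0 l1 M a b k (length M - k)); eassumption || lia.
Qed.

Lemma map_seq_succ (lam : nat -> Cx) (n : nat) :
  (1 <= n)%nat -> map lam (seq 1 n) = lam 1%nat :: map lam (seq 2 (n - 1)).
Proof. intros Hn; destruct n as [|n]; [lia|]; simpl; rewrite Nat.sub_0_r; reflexivity. Qed.

Theorem mainTheorem11 (lam : nat -> Cx) (n : nat) (a b : R) :
  (1 <= n)%nat ->
  lam 0%nat <> lam 1%nat ->
  a <> b ->
  ECT2 (map lam (seq 0 (S n))) a b ->
  ECT2 (lam 0%nat :: map lam (seq 2 (n - 1))) a b ->
  ECT2 (map lam (seq 1 n)) a b ->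
  ECT2 (map lam (seq 2 (n - 1))) a b ->
  forall k : nat, (k < n)%nat ->
  forall p02 p1 q : R -> Cx,
    bernstein (lam 0%nat :: map lam (seq 2 (n - 1))) a b k p02 ->
    bernstein (map lam (seq 1 n)) a b k p1 ->
    bernstein (map lam (seq 0 (S n))) a b (S k) q ->
    (exists Ck : Cx, Ck <> Czero /\ forall x, Csub (p02 x) (p1 x) = Cmul Ck (q x)) /\
    (exists L : Cx, L <> Cone /\ climit (fun x => Cdiv (p02 x) (p1 x)) b L).
Proof.
  intros Hn Hl _ Efull _ _ EM k _ p02 p1 q B02 B1 Bq.
  change (map lam (seq 0 (S n))) with (lam 0%nat :: map lam (seq 1 n)) in Efull, Bq.
  rewrite (map_seq_succ lam n Hn) in Efull, B1, Bq.
  exact (bernstein_difference _ _ _ a b k p02 p1 q Hl Efull EM B02 B1 Bq).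
Qed.
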